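(* Let $v:(0,\infty)\to[0,\infty)$ be differentiable, set $\tilde v(\rho)=\rho\,v(\rho)$, and let $c_2\in\mathbb{R}$, $d>0$ be constants. Let $(\rho_s,\theta_s)$ with $\rho_s>0$ and $\tilde v(\rho_s)>0$ be an equilibrium state, and consider the linear system for $(\rho_\sigma,\theta_\sigma)(x,t)$, $x\in\mathbb{R}$, $$\partial_t\begin{pmatrix}\rho_\sigma\\ \theta_\sigma\end{pmatrix}+A_x(\rho_s,\theta_s)\,\partial_x\begin{pmatrix}\rho_\sigma\\ \theta_\sigma\end{pmatrix}=0,\qquad A_x(\rho,\theta)=\begin{pmatrix}\tilde v'(\rho)\cos\theta & -\tilde v(\rho)\sin\theta\\ -d\frac{\tilde v'(\rho)}{\rho}\sin\theta & c_2\frac{\tilde v(\rho)}{\rho}\cos\theta\end{pmatrix}.$$ Then this system is hyperbolic if $\tilde v'(\rho_s)\ge 0$, or if $$\tilde v'(\rho_s)<0\quad\text{and}\quad \frac{\left(\tilde v'(\rho_s)-c_2\frac{\tilde v(\rho_s)}{\rho_s}\right)^2}{-4d\,\frac{\tilde v'(\rho_s)\tilde v(\rho_s)}{\rho_s}}\ \ge\ \tan^2\theta_s .$$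
   Context: This system is the linearization (with viscosity $\gamma=0$), around a state depending only on $x$, of the two-dimensional Self-Organized Hydrodynamic model $\partial_t\rho+\nabla\cdot(v(\rho)\rho\Omega)=0$, $\rho[\partial_t\Omega+(c_2v(\rho)\Omega\cdot\nabla)\Omega]+d\,P_{\Omega^\perp}\nabla(v(\rho)\rho)=0$, $|\Omega|=1$, written with $\Omega=(\cos\theta,\sin\theta)$. Here ''hyperbolic'' means that the matrix $A_x(\rho_s,\theta_s)$ has two real eigenvalues. *)

From HB Require Import structures.
From mathcomp Require Import all_boot all_order all_algebra.
From mathcomp Require Import all_classical all_reals all_analysis.
Set Implicit Arguments. Unset Strict Implicit. Unset Printing Implicit Defensive.
Import Order.TTheory GRing.Theory Num.Theory.
Local Open Scope ring_scope.

Definition mx2 {R : ringType} (a b c e : R) : 'M[R]_2 :=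
  \matrix_(i < 2, j < 2)
    if i == 0 then (if j == 0 then a else b) else (if j == 0 then c else e).

(* the linearized flux matrix A_x(rho, theta); vt = tilde v, dvt = tilde v' *)
Definition Ax {R : realType} (c2 d : R) (vt dvt : R -> R) (rho theta : R)
  : 'M[R]_2 :=
  mx2 (dvt rho * cos theta) (- (vt rho * sin theta))
      (- (d * (dvt rho / rho) * sin theta)) (c2 * (vt rho / rho) * cos theta).

(* hyperbolic: A has two real eigenvalues (counted with multiplicity),
   i.e. its characteristic polynomial splits over R *)
Definition hyperbolic {R : realType} (A : 'M[R]_2) : Prop :=
  exists l1 l2 : R, char_poly A = ('X - l1%:P) * ('X - l2%:P).

From HB Require Import structures.
From mathcomp Require Import all_boot all_order all_algebra.
From mathcomp Require Import all_classical all_reals all_analysis.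
From mathcomp Require Import ring.
Import Order.TTheory GRing.Theory Num.Theory.
Local Open Scope ring_scope.

(* A real 2x2 matrix is hyperbolic when the discriminant
   (a - e)^2 + 4bc of its characteristic polynomial is nonnegative.  For A_x
   this discriminant is (v' - c2 v/rho)^2 cos^2 + 4 d v' (v/rho) sin^2, which is
   a sum of squares when v' >= 0, and is nonnegative under the tangent
   condition when v' < 0 (multiply that condition by the positive quantities
   -4 d v' v/rho and cos^2). *)

Lemma char_poly_mx2 (R : comNzRingType) (a b c e : R) :
  char_poly (mx2 a b c e) = 'X^2 - (a + e)%:P * 'X + (a * e - b * c)%:P.
Proof.
rewrite /char_poly /char_poly_mx (expand_det_row _ 0) !big_ord_recl big_ord0.
rewrite /cofactor !det_mx11 /= !mxE /= /bump /= !polyCB !polyCD !polyCM.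
ring.
Qed.

Lemma mx2_hyperbolic (R : realType) (a b c e : R) :
  0 <= (a - e) ^+ 2 + 4 * (b * c) -> hyperbolic (mx2 a b c e).
Proof.
move=> discr_ge0; set s := Num.sqrt ((a - e) ^+ 2 + 4 * (b * c)).
have s2 : s ^+ 2 = (a - e) ^+ 2 + 4 * (b * c) by rewrite sqr_sqrtr.
exists ((a + e + s) / 2), ((a + e - s) / 2); rewrite char_poly_mx2.
have -> : ('X - ((a + e + s) / 2)%:P) * ('X - ((a + e - s) / 2)%:P) =
    'X^2 - ((a + e + s) / 2 + (a + e - s) / 2)%:P * 'X
      + ((a + e + s) / 2 * ((a + e - s) / 2))%:P :> {poly R}.
  by rewrite polyCD polyCM; ring.
have -> : (a + e + s) / 2 + (a + e - s) / 2 = a + e by field.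
have -> // : (a + e + s) / 2 * ((a + e - s) / 2) = a * e - b * c.
apply: (@mulfI _ 4) => //.
have -> : 4 * ((a + e + s) / 2 * ((a + e - s) / 2)) = (a + e) ^+ 2 - s ^+ 2
  by field.
by rewrite s2; ring.
Qed.

Lemma discr_Ax (R : comUnitRingType) (c2 d D V rho C S : R) :
  (D * C - c2 * (V / rho) * C) ^+ 2 + 4 * (- (V * S) * - (d * (D / rho) * S))
  = (D - c2 * (V / rho)) ^+ 2 * C ^+ 2 + 4 * d * D * (V / rho) * S ^+ 2.
Proof. by ring. Qed.

Lemma discr_ge0_dvt_ge0 (R : realDomainType) (d D W k C S : R) :
  0 < d -> 0 < W -> 0 <= D -> 0 <= k ^+ 2 * C ^+ 2 + 4 * d * D * W * S ^+ 2.
Proof.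
move=> d_gt0 W_gt0 D_ge0.
apply: addr_ge0; first exact: mulr_ge0 (sqr_ge0 k) (sqr_ge0 C).
apply: mulr_ge0 (sqr_ge0 S).
by rewrite !mulr_ge0 ?ler0n // ltW.
Qed.

Lemma discr_ge0_tan (R : realFieldType) (d D W k C S : R) :
  0 < d -> 0 < W -> D < 0 -> C != 0 ->
  (S / C) ^+ 2 <= k ^+ 2 / - (4 * d * (D * W)) ->
  0 <= k ^+ 2 * C ^+ 2 + 4 * d * D * W * S ^+ 2.
Proof.
move=> d_gt0 W_gt0 D_lt0 C_neq0.
have M_gt0 : 0 < - (4 * d * (D * W)).
  by rewrite oppr_gt0 pmulr_rlt0 ?mulr_gt0 // pmulr_llt0.
have C2_gt0 : 0 < C ^+ 2 by rewrite exprn_even_gt0.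
rewrite ler_pdivlMr // -(ler_pM2r C2_gt0).
have -> : (S / C) ^+ 2 * - (4 * d * (D * W)) * C ^+ 2
          = - (4 * d * D * W * S ^+ 2) by field.
by rewrite -subr_ge0 opprK.
Qed.

Theorem mainTheorem1 (R : realType) (v : R -> R) (c2 d rhos thetas : R) :
  (forall r : R, 0 < r -> derivable v r 1) ->
  (forall r : R, 0 < r -> 0 <= v r) ->
  0 < d ->
  0 < rhos ->
  0 < rhos * v rhos ->
  let vt := fun r : R => r * v r in
  let dvt := fun r : R => derive1 vt r in
  (0 <= dvt rhos \/
   (dvt rhos < 0 /\ cos thetas != 0 /\
    (dvt rhos - c2 * (vt rhos / rhos)) ^+ 2
      / (- (4 * d * (dvt rhos * vt rhos / rhos))) >= tan thetas ^+ 2)) ->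
  hyperbolic (Ax c2 d vt dvt rhos thetas).
Proof.
move=> _ _ d_gt0 rhos_gt0 vt_gt0 vt dvt cond.
have W_gt0 : 0 < vt rhos / rhos by rewrite divr_gt0.
apply: mx2_hyperbolic; rewrite discr_Ax.
case: cond => [D_ge0 | [D_lt0 [C_neq0 tan_le]]].
  exact: discr_ge0_dvt_ge0.
rewrite /tan -[_ * vt rhos / rhos]mulrA in tan_le.
exact: discr_ge0_tan d_gt0 W_gt0 D_lt0 C_neq0 tan_le.
Qed.
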